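(* Let $V$ be a set of variables and $\mathcal{R}=\{r_1,\ldots,r_m\}$ be a set of transition rules on $V$. Then $s \xrightarrow{r_i} s'$ iff the sequent $\llbracket r_1\rrbracket @ 0,\ldots,\llbracket r_m\rrbracket @ 0;\ \llbracket s\rrbracket @ w \vdash \delta_1\llbracket s'\rrbracket @ w$ is provable in HyLL.
   Context: HyLL is hybrid (intuitionistic) linear logic with sequents $\Gamma;\Delta\vdash C@w$ ($\Gamma$ unbounded context, $\Delta$ linear context) and hybrid connectives $A\ \mathsf{at}\ u$ and $\downarrow u.A$; worlds here form the monoid $\langle\mathbb{N},+,0\rangle$ (written $u.v$ for composition). A state $s$ over $V=\{a_1,\ldots,a_n\}$ is a conjunction $p_1(a_1)\wedge\cdots\wedge p_n(a_n)$ with each $p_i$ either present or absent; a transition rule $r:s\to s'$ enables the transition $s\xrightarrow{r}s'$. Encoding into HyLL: $\llbracket p_i(a_i)\rrbracket = p_i(a_i)$ (an atom), $\llbracket s\rrbracket=\bigotimes_{i\in 1..n}\llbracket p_i(a_i)\rrbracket$, $\llbracket r: s\to s'\rrbracket = \forall w.\big((\llbracket s\rrbracket\ \mathsf{at}\ w)\multimap \delta_1(\llbracket s'\rrbracket)\ \mathsf{at}\ w\big)$, where the delay connective is $\delta_v A = \downarrow u.(A\ \mathsf{at}\ u.v)$. *)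

From Stdlib Require Import List Arith PeanoNat.
From Stdlib Require Export Permutation.
Import ListNotations.

(* World expressions: bound world variables (de Bruijn indices), free
   world variables (eigenvariables), constants of the monoid nat, and
   composition u.v (= u + v).                                          *)
Inductive wexp : Type :=
| WBound : nat -> wexp
| WFree  : nat -> wexp
| WConst : nat -> wexp
| WCat   : wexp -> wexp -> wexp.

Fixpoint weval (rho : nat -> nat) (e : wexp) : nat :=
  match e with
  | WBound _ => 0
  | WFree x => rho x
  | WConst k => k
  | WCat a b => weval rho a + weval rho b
  end.

Definition weq (u v : wexp) : Prop := forall rho, weval rho u = weval rho v.

Fixpoint wlc (e : wexp) : Prop :=
  match e with
  | WBound _ => False
  | WFree _ | WConst _ => True
  | WCat a b => wlc a /\ wlc b
  end.

Fixpoint wfv (e : wexp) : list nat :=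
  match e with
  | WFree x => [x]
  | WCat a b => wfv a ++ wfv b
  | _ => []
  end.

(* Atoms: the predicates present/absent applied to a variable a_i
   (a_i is represented by its index i). *)
Inductive pred_sym : Type := Present | Absent.

Inductive prop : Type :=
| Atom   : pred_sym -> nat -> prop
| Tensor : prop -> prop -> prop
| One    : prop
| Lolli  : prop -> prop -> prop
| With   : prop -> prop -> prop
| Top    : prop
| Plus   : prop -> prop -> prop
| Zero   : prop
| Bang   : prop -> prop
| At     : prop -> wexp -> prop
| Down   : prop -> prop                  (* down u. A   (binds WBound 0) *)
| WAll   : prop -> prop                  (* forall u. A (binds WBound 0) *)
| WEx    : prop -> prop.                 (* exists u. A (binds WBound 0) *)

Definition wopen (k : nat) (e : wexp) : wexp -> wexp :=
  fix f w := match w with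
  | WBound j => if Nat.eqb j k then e else WBound j
  | WCat a b => WCat (f a) (f b)
  | w => w
  end.

Fixpoint popen (k : nat) (e : wexp) (A : prop) : prop :=
  match A with
  | Atom p i => Atom p i
  | Tensor A B => Tensor (popen k e A) (popen k e B)
  | One => One
  | Lolli A B => Lolli (popen k e A) (popen k e B)
  | With A B => With (popen k e A) (popen k e B)
  | Top => Top
  | Plus A B => Plus (popen k e A) (popen k e B)
  | Zero => Zero
  | Bang A => Bang (popen k e A)
  | At A u => At (popen k e A) (wopen k e u)
  | Down A => Down (popen (S k) e A)
  | WAll A => WAll (popen (S k) e A)
  | WEx A => WEx (popen (S k) e A)
  end.

Definition wshift (c : nat) : wexp -> wexp :=
  fix f w := match w with
  | WBound j => if Nat.leb c j then WBound (S j) else WBound j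
  | WCat a b => WCat (f a) (f b)
  | w => w
  end.

Fixpoint pshift (c : nat) (A : prop) : prop :=
  match A with
  | Atom p i => Atom p i
  | Tensor A B => Tensor (pshift c A) (pshift c B)
  | One => One
  | Lolli A B => Lolli (pshift c A) (pshift c B)
  | With A B => With (pshift c A) (pshift c B)
  | Top => Top
  | Plus A B => Plus (pshift c A) (pshift c B)
  | Zero => Zero
  | Bang A => Bang (pshift c A)
  | At A u => At (pshift c A) (wshift c u)
  | Down A => Down (pshift (S c) A)
  | WAll A => WAll (pshift (S c) A)
  | WEx A => WEx (pshift (S c) A)
  end.

Fixpoint pfv (A : prop) : list nat :=
  match A with
  | Atom _ _ | One | Top | Zero => []
  | Tensor A B | Lolli A B | With A B | Plus A B => pfv A ++ pfv B
  | Bang A | Down A | WAll A | WEx A => pfv A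
  | At A u => pfv A ++ wfv u
  end.

Definition ctx := list (prop * wexp).

Definition ctxfv (G : ctx) : list nat :=
  flat_map (fun Au => pfv (fst Au) ++ wfv (snd Au)) G.

(* The HyLL sequent calculus  G ; D |- C @ w  (cut-free; cut is admissible).
   G: unbounded context, D: linear context (a multiset, via exchange). *)
Inductive hyll : ctx -> ctx -> prop -> wexp -> Prop :=
| h_exch : forall G D D' C w,
    Permutation D D' -> hyll G D C w -> hyll G D' C w
| h_init : forall G p i u w,
    weq u w -> hyll G [(Atom p i, u)] (Atom p i) w
| h_copy : forall G D A u C w,
    In (A, u) G -> hyll G ((A, u) :: D) C w -> hyll G D C w
| h_tensorR : forall G D1 D2 A B w,
    hyll G D1 A w -> hyll G D2 B w -> hyll G (D1 ++ D2) (Tensor A B) w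
| h_tensorL : forall G D A B u C w,
    hyll G ((A, u) :: (B, u) :: D) C w -> hyll G ((Tensor A B, u) :: D) C w
| h_oneR : forall G w, hyll G [] One w
| h_oneL : forall G D u C w,
    hyll G D C w -> hyll G ((One, u) :: D) C w
| h_lolliR : forall G D A B w,
    hyll G ((A, w) :: D) B w -> hyll G D (Lolli A B) w
| h_lolliL : forall G D1 D2 A B u C w,
    hyll G D1 A u -> hyll G ((B, u) :: D2) C w ->
    hyll G ((Lolli A B, u) :: D1 ++ D2) C w
| h_withR : forall G D A B w,
    hyll G D A w -> hyll G D B w -> hyll G D (With A B) w
| h_withL1 : forall G D A B u C w,
    hyll G ((A, u) :: D) C w -> hyll G ((With A B, u) :: D) C w
| h_withL2 : forall G D A B u C w,
    hyll G ((B, u) :: D) C w -> hyll G ((With A B, u) :: D) C w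
| h_topR : forall G D w, hyll G D Top w
| h_plusR1 : forall G D A B w, hyll G D A w -> hyll G D (Plus A B) w
| h_plusR2 : forall G D A B w, hyll G D B w -> hyll G D (Plus A B) w
| h_plusL : forall G D A B u C w,
    hyll G ((A, u) :: D) C w -> hyll G ((B, u) :: D) C w ->
    hyll G ((Plus A B, u) :: D) C w
| h_zeroL : forall G D u C w, hyll G ((Zero, u) :: D) C w
| h_bangR : forall G A w, hyll G [] A w -> hyll G [] (Bang A) w
| h_bangL : forall G D A u C w,
    hyll ((A, u) :: G) D C w -> hyll G ((Bang A, u) :: D) C w
| h_atR : forall G D A u w,
    hyll G D A u -> hyll G D (At A u) w
| h_atL : forall G D A u v C w,
    hyll G ((A, u) :: D) C w -> hyll G ((At A u, v) :: D) C w
| h_downR : forall G D A w,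
    hyll G D (popen 0 w A) w -> hyll G D (Down A) w
| h_downL : forall G D A u C w,
    hyll G ((popen 0 u A, u) :: D) C w -> hyll G ((Down A, u) :: D) C w
| h_allR : forall G D A w x,
    ~ In x (ctxfv G ++ ctxfv D ++ pfv A ++ wfv w) ->
    hyll G D (popen 0 (WFree x) A) w -> hyll G D (WAll A) w
| h_allL : forall G D A e u C w,
    wlc e -> hyll G ((popen 0 e A, u) :: D) C w ->
    hyll G ((WAll A, u) :: D) C w
| h_exR : forall G D A e w,
    wlc e -> hyll G D (popen 0 e A) w -> hyll G D (WEx A) w
| h_exL : forall G D A u C w x,
    ~ In x (ctxfv G ++ ctxfv D ++ pfv A ++ wfv u ++ pfv C ++ wfv w) ->
    hyll G ((popen 0 (WFree x) A, u) :: D) C w ->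
    hyll G ((WEx A, u) :: D) C w.

(* States over V = {a_1,...,a_n}: a list of n booleans; the i-th entry is
   true if p_i = present, false if p_i = absent. *)
Definition state := list bool.

Definition enc_lit (b : bool) (i : nat) : prop :=
  Atom (if b then Present else Absent) i.

Fixpoint enc_lits (k : nat) (s : state) : list prop :=
  match s with
  | [] => []
  | b :: s' => enc_lit b k :: enc_lits (S k) s'
  end.

Fixpoint tensor_list (l : list prop) : prop :=
  match l with
  | [] => One
  | [A] => A
  | A :: l' => Tensor A (tensor_list l')
  end.

Definition enc_state (s : state) : prop := tensor_list (enc_lits 0 s).

(* delay:  delta_v A = down u. (A at u.v) *)
Definition delta (v : nat) (A : prop) : prop :=
  Down (At (pshift 0 A) (WCat (WBound 0) (WConst v))).

Record rule : Type := mk_rule { pre : state; post : state }.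

Definition transition (r : rule) (s s' : state) : Prop :=
  pre r = s /\ post r = s'.

(* [[ r : s -> s' ]] = forall w. ((s at w) -o (delta_1 s') at w) *)
Definition enc_rule (r : rule) : prop :=
  WAll (Lolli (At (enc_state (pre r)) (WBound 0))
              (At (delta 1 (enc_state (post r))) (WBound 0))).

Definition rules_ctx (R : list rule) : ctx :=
  map (fun r => (enc_rule r, WConst 0)) R.

From Stdlib Require Import List Lia PeanoNat.
Import ListNotations.

(* Firing r : s -> s' is a direct derivation: copy [[r]], instantiate its world
   quantifier with w, and close both premises of the linear implication with
   identity sequents on the encoded states.

   Conversely, interpret HyLL in a resource model: an atom p(a_i) at world t
   is a resource (p, i, t), a rule firing replaces the resources of its
   precondition at some time t by those of its postcondition at time t + 1,
   and A at world u denotes the multisets of resources that the rules can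
   rewrite into one matching A at u.  Every inference rule of HyLL is sound
   for this model and the encodings of the rules are valid in it, so the
   sequent yields a rewriting of s at time w into s' at time w + 1.  Since
   every rule has n > 0 variables on each side, each firing raises the total
   time of a multiset by exactly n, so exactly one rule fires, and since it
   consumes all n resources it is a rule s -> s'. *)

Fixpoint wclosed (k : nat) (e : wexp) : Prop :=
  match e with
  | WBound j => j < k
  | WCat a b => wclosed k a /\ wclosed k b
  | _ => True
  end.

Fixpoint pclosed (k : nat) (A : prop) : Prop :=
  match A with
  | Atom _ _ | One | Top | Zero => True
  | Tensor A B | Lolli A B | With A B | Plus A B => pclosed k A /\ pclosed k B
  | Bang A => pclosed k A
  | At A u => pclosed k A /\ wclosed k u
  | Down A | WAll A | WEx A => pclosed (S k) A
  end.

Lemma wclosed_mono k k' e : k <= k' -> wclosed k e -> wclosed k' e.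
Proof. induction e; simpl; intuition lia. Qed.

Lemma wlc_wclosed e : wlc e -> wclosed 0 e.
Proof. induction e; simpl; intuition. Qed.

Lemma wclosed_wopen k e t : wclosed 0 e -> wclosed (S k) t -> wclosed k (wopen k e t).
Proof.
  intros He. induction t as [j| | |]; simpl; intuition.
  destruct (Nat.eqb_spec j k); simpl; [apply wclosed_mono with 0|]; auto; lia.
Qed.

Lemma pclosed_popen A k e : wclosed 0 e -> pclosed (S k) A -> pclosed k (popen k e A).
Proof. revert k; induction A; simpl; intuition auto using wclosed_wopen. Qed.

Lemma tensor_list_ind (P : prop -> Prop) l :
  P One -> (forall A B, P A -> P B -> P (Tensor A B)) -> Forall P l -> P (tensor_list l).
Proof.
  intros H1 HT Hl. induction Hl as [|A [|B l] HA _ IH]; simpl in *; auto.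
Qed.

Lemma enc_state_ind (P : prop -> Prop) s :
  P One -> (forall A B, P A -> P B -> P (Tensor A B)) -> (forall p i, P (Atom p i)) ->
  P (enc_state s).
Proof.
  intros H1 HT HA. unfold enc_state. apply tensor_list_ind; auto.
  generalize 0. induction s; simpl; constructor; auto. apply HA.
Qed.

Lemma pshift_enc_state c s : pshift c (enc_state s) = enc_state s.
Proof. apply (enc_state_ind (fun A => pshift c A = A)); simpl; congruence. Qed.

Lemma popen_enc_state k e s : popen k e (enc_state s) = enc_state s.
Proof. apply (enc_state_ind (fun A => popen k e A = A)); simpl; congruence. Qed.

Lemma pclosed_enc_state k s : pclosed k (enc_state s).
Proof. apply (enc_state_ind (pclosed k)); simpl; tauto. Qed.

Lemma hyll_enc_state_id G s u : hyll G [(enc_state s, u)] (enc_state s) u.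
Proof.
  apply (enc_state_ind (fun A => hyll G [(A, u)] A u)).
  - apply h_oneL, h_oneR.
  - intros A B HA HB. apply h_tensorL, (h_tensorR G [(A, u)] [(B, u)]); auto.
  - intros p i. now apply h_init.
Qed.

Lemma hyll_fire_rule G r u e : In (enc_rule r, u) G -> wlc e ->
  hyll G [(enc_state (pre r), e)] (delta 1 (enc_state (post r))) e.
Proof.
  intros Hr He. apply (h_copy _ _ _ _ _ _ Hr), (h_allL _ _ _ e); auto.
  unfold enc_rule, delta. cbn [popen wopen Nat.eqb].
  rewrite pshift_enc_state, !popen_enc_state.
  apply (h_lolliL _ [(enc_state (pre r), e)] []).
  - apply h_atR, hyll_enc_state_id.
  - apply h_atL, h_downR. cbn [popen wopen Nat.eqb]. rewrite popen_enc_state.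
    apply h_atR, h_downL. cbn [popen wopen Nat.eqb]. rewrite popen_enc_state.
    apply h_atL, hyll_enc_state_id.
Qed.

Definition res : Type := pred_sym * nat * nat.

Definition sym (b : bool) : pred_sym := if b then Present else Absent.

Fixpoint state_res (k : nat) (s : state) (t : nat) : list res :=
  match s with
  | [] => []
  | b :: s' => (sym b, k, t) :: state_res (S k) s' t
  end.

Lemma length_state_res k s t : length (state_res k s t) = length s.
Proof. revert k; induction s; simpl; auto. Qed.

Lemma in_state_res p i x k s t :
  In (p, i, x) (state_res k s t) <->
  x = t /\ k <= i /\ exists b, nth_error s (i - k) = Some b /\ p = sym b.
Proof.
  revert k; induction s as [|b s IH]; intros k; simpl.
  - split; [tauto|]. intros (_ & _ & b & Hb & _). destruct (i - k); discriminate.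
  - rewrite IH. split.
    + intros [E | (-> & Hki & b' & Hb' & ->)].
      * injection E as <- <- <-. rewrite Nat.sub_diag. split; [|split]; [reflexivity|lia|now exists b].
      * replace (i - k) with (S (i - S k)) by lia. split; [|split; [lia|]]; eauto.
    + intros (-> & Hki & b' & Hb' & ->). destruct (Nat.eq_dec i k) as [-> | Hik].
      * rewrite Nat.sub_diag in Hb'. injection Hb' as ->. auto.
      * replace (i - k) with (S (i - S k)) in Hb' by lia. right. split; [|split; [lia|]]; eauto.
Qed.

Lemma state_res_perm_inj s s' t t' :
  Permutation (state_res 0 s t) (state_res 0 s' t') -> s = s'.
Proof.
  intros HP.
  assert (Hlen : length s = length s').
  { apply Permutation_length in HP. now rewrite !length_state_res in HP. }
  apply nth_error_ext. intros i.
  destruct (nth_error s i) as [b|] eqn:Hb.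
  - assert (Hin : In (sym b, i, t) (state_res 0 s t)).
    { apply in_state_res. rewrite Nat.sub_0_r. split; [|split; [lia|]]; eauto. }
    apply (Permutation_in _ HP), in_state_res in Hin as (_ & _ & b' & Hb' & Hsym).
    rewrite Nat.sub_0_r in Hb'. rewrite Hb'. destruct b, b'; easy.
  - apply nth_error_None in Hb. symmetry. apply nth_error_None. lia.
Qed.

Lemma Permutation_concat {A : Type} (l l' : list (list A)) :
  Permutation l l' -> Permutation (concat l) (concat l').
Proof.
  intros HP. rewrite <- (map_id l), <- (map_id l'), <- !flat_map_concat_map.
  now apply Permutation_flat_map.
Qed.

Fixpoint wval (env : list nat) (rho : nat -> nat) (e : wexp) : nat :=
  match e with
  | WBound j => nth j env 0
  | WFree x => rho x
  | WConst k => k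
  | WCat a b => wval env rho a + wval env rho b
  end.

Lemma wval_nil rho e : wval [] rho e = weval rho e.
Proof. induction e as [[]| | |]; simpl; auto. Qed.

Lemma wval_closed env rho e : wclosed 0 e -> wval env rho e = weval rho e.
Proof. induction e; simpl; intuition lia. Qed.

Lemma wval_wopen env rho e t :
  wclosed 0 e -> wval env rho (wopen (length env) e t) = wval (env ++ [weval rho e]) rho t.
Proof.
  intros He. induction t as [j| | |]; simpl; auto.
  destruct (Nat.eqb_spec j (length env)) as [-> | Hj].
  - rewrite app_nth2, Nat.sub_diag by lia. now apply wval_closed.
  - simpl. destruct (Nat.lt_ge_cases j (length env)).
    + now rewrite app_nth1.
    + rewrite !nth_overflow; rewrite ?length_app; simpl; lia.
Qed.

Lemma wval_fv env rho rho' e :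
  (forall y, In y (wfv e) -> rho y = rho' y) -> wval env rho e = wval env rho' e.
Proof.
  induction e; simpl; intros H; auto.
  rewrite IHe1, IHe2; auto; intros; apply H; apply in_or_app; auto.
Qed.

Definition upd (rho : nat -> nat) (x v : nat) : nat -> nat :=
  fun y => if Nat.eqb y x then v else rho y.

Lemma upd_eq rho x v : upd rho x v x = v.
Proof. unfold upd. now rewrite Nat.eqb_refl. Qed.

Lemma upd_neq rho x v y : y <> x -> upd rho x v y = rho y.
Proof. unfold upd. intros Hyx. now destruct (Nat.eqb_spec y x). Qed.

Section Resource_model.

Variable R : list rule.

Definition step (M N : list res) : Prop :=
  exists r t K, In r R /\ Permutation M (state_res 0 (pre r) t ++ K) /\
                Permutation N (state_res 0 (post r) (t + 1) ++ K).

Inductive red : list res -> list res -> Prop :=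
| red_perm : forall M N, Permutation M N -> red M N
| red_step : forall M N K, step M N -> red N K -> red M K.

Lemma red_refl M : red M M.
Proof. now apply red_perm. Qed.

Lemma red_perm_l M M' N : Permutation M M' -> red M' N -> red M N.
Proof.
  intros HP HN. revert M HP.
  destruct HN as [M' N HP' | M' N' N (r & t & L & Hr & Hpre & Hpost) HN]; intros M HP.
  - apply red_perm. now transitivity M'.
  - apply red_step with N'; auto. exists r, t, L. split; [|split]; auto. now transitivity M'.
Qed.

Lemma red_trans M N K : red M N -> red N K -> red M K.
Proof.
  induction 1 as [M N HP | M N N' Hs _ IH]; intros HK.
  - now apply (red_perm_l M N K).
  - apply red_step with N; auto.
Qed.

Lemma step_app_tail M N L : step M N -> step (M ++ L) (N ++ L).
Proof.
  intros (r & t & K & Hr & Hpre & Hpost). exists r, t, (K ++ L).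
  rewrite !app_assoc. split; [|split]; auto using Permutation_app_tail.
Qed.

Lemma red_app_tail M M' L : red M M' -> red (M ++ L) (M' ++ L).
Proof.
  induction 1 as [M M' HP | M N M' Hs _ IH].
  - now apply red_perm, Permutation_app_tail.
  - apply red_step with (N ++ L); auto using step_app_tail.
Qed.

Lemma red_app M M' N N' : red M M' -> red N N' -> red (M ++ N) (M' ++ N').
Proof.
  intros HM HN. apply red_trans with (M' ++ N); [now apply red_app_tail|].
  apply red_perm_l with (N ++ M'); [apply Permutation_app_comm|].
  apply red_trans with (N' ++ M'); [now apply red_app_tail|].
  apply red_perm, Permutation_app_comm.
Qed.

(* [env] values the bound world variables, [rho] the free ones. *)
Fixpoint sem (env : list nat) (rho : nat -> nat) (A : prop) (u : nat) (M : list res)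
  {struct A} : Prop :=
  match A with
  | Atom p i => red M [(p, i, u)]
  | Tensor A B => exists M1 M2, red M (M1 ++ M2) /\ sem env rho A u M1 /\ sem env rho B u M2
  | One => red M []
  | Lolli A B => forall N, sem env rho A u N -> sem env rho B u (M ++ N)
  | With A B => sem env rho A u M /\ sem env rho B u M
  | Top => True
  | Plus A B => sem env rho A u M \/ sem env rho B u M
  | Zero => False
  | Bang A => red M [] /\ sem env rho A u []
  | At A e => sem env rho A (wval env rho e) M
  | Down A => sem (u :: env) rho A u M
  | WAll A => forall v, sem (v :: env) rho A u M
  | WEx A => exists v, sem (v :: env) rho A u M
  end.

Lemma sem_red A env rho u M M' : red M M' -> sem env rho A u M' -> sem env rho A u M.
Proof.
  revert env u M M'.
  induction A; simpl; intros env u M M' Hr H; try tauto; eauto using red_trans.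
  - destruct H as (M1 & M2 & H12 & H1 & H2). eauto 6 using red_trans.
  - intros N HN. eapply IHA2; eauto using red_app_tail.
  - destruct H; split; eauto.
  - destruct H; eauto.
  - destruct H; split; eauto using red_trans.
  - destruct H as [v H]; eauto.
Qed.

Lemma sem_popen A env rho e u M : wclosed 0 e ->
  sem env rho (popen (length env) e A) u M <-> sem (env ++ [weval rho e]) rho A u M.
Proof.
  intros He. revert env u M.
  induction A; intros env u M; simpl; try tauto.
  - split; intros (M1 & M2 & H12 & H1 & H2); exists M1, M2;
      rewrite ?IHA1, ?IHA2 in *; auto.
  - split; intros H N HN; apply IHA2, H, IHA1; auto.
  - now rewrite IHA1, IHA2.
  - now rewrite IHA1, IHA2.
  - now rewrite IHA.
  - now rewrite wval_wopen, IHA.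
  - apply (IHA (u :: env)).
  - split; intros H v; apply (IHA (v :: env)), H.
  - split; intros [v H]; exists v; apply (IHA (v :: env)), H.
Qed.

Lemma sem_popen0 A rho e u M : wclosed 0 e ->
  sem [] rho (popen 0 e A) u M <-> sem [weval rho e] rho A u M.
Proof. apply (sem_popen A []). Qed.

Lemma sem_fv A env rho rho' u M : (forall y, In y (pfv A) -> rho y = rho' y) ->
  sem env rho A u M <-> sem env rho' A u M.
Proof.
  revert env u M.
  induction A; intros env u M Hrho; simpl in *; try tauto;
    repeat match goal with
    | IH : forall _ _ _, (forall y, In y (pfv ?A) -> _) -> _ |- _ =>
        specialize (fun env u M => IH env u M ltac:(intros; apply Hrho; rewrite ?in_app_iff; auto))
    end.
  - split; intros (M1 & M2 & H12 & H1 & H2); exists M1, M2; rewrite ?IHA1, ?IHA2 in *; auto.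
  - split; intros H N HN; apply IHA2, H, IHA1; auto.
  - now rewrite IHA1, IHA2.
  - now rewrite IHA1, IHA2.
  - now rewrite IHA.
  - rewrite (wval_fv env rho rho'); auto. intros; apply Hrho, in_or_app; auto.
  - apply IHA.
  - split; intros H v; apply IHA, H.
  - split; intros [v H]; exists v; apply IHA, H.
Qed.

Lemma weval_upd_fresh e rho x v : ~ In x (wfv e) -> weval (upd rho x v) e = weval rho e.
Proof.
  intros Hx. rewrite <- !wval_nil. apply wval_fv.
  intros y Hy. apply upd_neq. intros ->. contradiction.
Qed.

Lemma sem_upd_fresh A u rho x v M : ~ In x (pfv A ++ wfv u) ->
  sem [] (upd rho x v) A (weval (upd rho x v) u) M <-> sem [] rho A (weval rho u) M.
Proof.
  rewrite in_app_iff. intros Hx. rewrite weval_upd_fresh by tauto.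
  apply sem_fv. intros y Hy. apply upd_neq. intros ->. tauto.
Qed.

Lemma sem_open_fresh A rho x v u M : ~ In x (pfv A) ->
  sem [] (upd rho x v) (popen 0 (WFree x) A) u M <-> sem [v] rho A u M.
Proof.
  intros Hx. rewrite sem_popen0 by exact I. simpl. rewrite upd_eq.
  apply sem_fv. intros y Hy. apply upd_neq. intros ->. contradiction.
Qed.

Definition wf_ctx (G : ctx) : Prop :=
  Forall (fun Au => pclosed 0 (fst Au) /\ wclosed 0 (snd Au)) G.

Definition sem_unres (rho : nat -> nat) (G : ctx) : Prop :=
  forall A u, In (A, u) G -> sem [] rho A (weval rho u) [].

Definition sem_lin (rho : nat -> nat) (D : ctx) (Ms : list (list res)) : Prop :=
  Forall2 (fun Au M => sem [] rho (fst Au) (weval rho (snd Au)) M) D Ms.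

Lemma in_ctxfv y A u G : In (A, u) G -> In y (pfv A ++ wfv u) -> In y (ctxfv G).
Proof. intros; apply in_flat_map; exists (A, u); auto. Qed.

Lemma sem_unres_upd rho x v G : ~ In x (ctxfv G) ->
  sem_unres rho G -> sem_unres (upd rho x v) G.
Proof.
  intros Hx HG A u Hin. apply sem_upd_fresh; auto.
  intros Hx'. eauto using in_ctxfv.
Qed.

Lemma sem_lin_upd rho x v D Ms : ~ In x (ctxfv D) ->
  sem_lin rho D Ms -> sem_lin (upd rho x v) D Ms.
Proof.
  intros Hx HD. induction HD as [|[A u] M D Ms HM _ IH]; constructor.
  - apply sem_upd_fresh; auto. intros Hx'. apply Hx, (in_ctxfv x A u); simpl; auto.
  - apply IH. intros Hx'. apply Hx. unfold ctxfv. simpl. apply in_or_app; auto.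
Qed.

Lemma sem_lin_cons_inv rho A u D Ms : sem_lin rho ((A, u) :: D) Ms ->
  exists M Ms', Ms = M :: Ms' /\ sem [] rho A (weval rho u) M /\ sem_lin rho D Ms'.
Proof. intros H. inversion H; subst. eauto. Qed.

(* Closedness is part of the invariant because [popen] does not shift the
   world it substitutes. *)
Definition valid (G D : ctx) (C : prop) (w : wexp) : Prop :=
  wf_ctx G -> wf_ctx D -> pclosed 0 C -> wclosed 0 w ->
  forall rho, sem_unres rho G -> forall Ms, sem_lin rho D Ms ->
  sem [] rho C (weval rho w) (concat Ms).

Lemma valid_left G D A A' u u' C w :
  (pclosed 0 A -> wclosed 0 u -> pclosed 0 A' /\ wclosed 0 u' /\
     forall rho M, sem [] rho A (weval rho u) M -> sem [] rho A' (weval rho u') M) ->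
  valid G ((A', u') :: D) C w -> valid G ((A, u) :: D) C w.
Proof.
  intros Hent Hv HG HD HC Hw rho HsG Ms HMs.
  apply Forall_cons_iff in HD as [[HA Hu] HD].
  destruct (Hent HA Hu) as (HA' & Hu' & Hsem).
  destruct (sem_lin_cons_inv _ _ _ _ _ HMs) as (M & Ms' & -> & HM & HMs').
  apply Hv; auto; constructor; auto.
Qed.

Lemma valid_right G D C C' w w' :
  (pclosed 0 C -> wclosed 0 w -> pclosed 0 C' /\ wclosed 0 w' /\
     forall rho M, sem [] rho C' (weval rho w') M -> sem [] rho C (weval rho w) M) ->
  valid G D C' w' -> valid G D C w.
Proof.
  intros Hent Hv HG HD HC Hw rho HsG Ms HMs.
  destruct (Hent HC Hw) as (HC' & Hw' & Hsem). auto.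
Qed.

Lemma valid_exch G D D' C w : Permutation D D' -> valid G D C w -> valid G D' C w.
Proof.
  intros HP Hv HG HD HC Hw rho HsG Ms HMs.
  destruct (Permutation_Forall2 (Permutation_sym HP) HMs) as (Ms' & HMM & HMs').
  apply sem_red with (concat Ms'); [apply red_perm, Permutation_concat, HMM|].
  apply Hv; auto. eapply Permutation_Forall; [apply Permutation_sym, HP | exact HD].
Qed.

Lemma valid_init G p i u w : weq u w -> valid G [(Atom p i, u)] (Atom p i) w.
Proof.
  intros Huw _ _ _ _ rho _ Ms HMs.
  destruct (sem_lin_cons_inv _ _ _ _ _ HMs) as (M & Ms' & -> & HM & HMs').
  inversion HMs'. simpl. now rewrite app_nil_r, <- (Huw rho).
Qed.

Lemma valid_copy G D A u C w :
  In (A, u) G -> valid G ((A, u) :: D) C w -> valid G D C w.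
Proof.
  intros Hin Hv HG HD HC Hw rho HsG Ms HMs.
  apply (Hv HG) with (Ms := [] :: Ms); auto.
  - constructor; auto. exact (proj1 (Forall_forall _ G) HG _ Hin).
  - constructor; auto.
Qed.

Lemma valid_tensorR G D1 D2 A B w :
  valid G D1 A w -> valid G D2 B w -> valid G (D1 ++ D2) (Tensor A B) w.
Proof.
  intros Hv1 Hv2 HG HD [HA HB] Hw rho HsG Ms HMs.
  apply Forall_app in HD as [HD1 HD2].
  apply Forall2_app_inv_l in HMs as (Ms1 & Ms2 & HMs1 & HMs2 & ->).
  exists (concat Ms1), (concat Ms2). rewrite concat_app. auto using red_refl.
Qed.

Lemma valid_tensorL G D A B u C w :
  valid G ((A, u) :: (B, u) :: D) C w -> valid G ((Tensor A B, u) :: D) C w.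
Proof.
  intros Hv HG HD HC Hw rho HsG Ms HMs.
  apply Forall_cons_iff in HD as [[[HA HB] Hu] HD].
  destruct (sem_lin_cons_inv _ _ _ _ _ HMs) as (M & Ms' & -> & HM & HMs').
  destruct HM as (M1 & M2 & H12 & H1 & H2).
  apply sem_red with ((M1 ++ M2) ++ concat Ms'); [now apply red_app_tail|].
  rewrite <- app_assoc. apply (Hv HG) with (Ms := M1 :: M2 :: Ms'); auto.
  all: repeat constructor; auto.
Qed.

Lemma valid_oneR G w : valid G [] One w.
Proof. intros _ _ _ _ rho _ Ms HMs. inversion HMs. apply red_refl. Qed.

Lemma valid_oneL G D u C w : valid G D C w -> valid G ((One, u) :: D) C w.
Proof.
  intros Hv HG HD HC Hw rho HsG Ms HMs.
  apply Forall_cons_iff in HD as [_ HD].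
  destruct (sem_lin_cons_inv _ _ _ _ _ HMs) as (M & Ms' & -> & HM & HMs').
  apply sem_red with ([] ++ concat Ms'); [now apply red_app_tail|]. now apply Hv.
Qed.

Lemma valid_lolliR G D A B w :
  valid G ((A, w) :: D) B w -> valid G D (Lolli A B) w.
Proof.
  intros Hv HG HD [HA HB] Hw rho HsG Ms HMs N HN.
  apply sem_red with (N ++ concat Ms); [apply red_perm, Permutation_app_comm|].
  apply (Hv HG) with (Ms := N :: Ms); auto; constructor; auto.
Qed.

Lemma valid_lolliL G D1 D2 A B u C w :
  valid G D1 A u -> valid G ((B, u) :: D2) C w ->
  valid G ((Lolli A B, u) :: D1 ++ D2) C w.
Proof.
  intros Hv1 Hv2 HG HD HC Hw rho HsG Ms HMs.
  apply Forall_cons_iff in HD as [[[HA HB] Hu] HD].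
  apply Forall_app in HD as [HD1 HD2].
  destruct (sem_lin_cons_inv _ _ _ _ _ HMs) as (M & Ms' & -> & HM & HMs').
  apply Forall2_app_inv_l in HMs' as (Ms1 & Ms2 & HMs1 & HMs2 & ->).
  simpl. rewrite concat_app, app_assoc.
  apply (Hv2 HG) with (Ms := (M ++ concat Ms1) :: Ms2); auto.
  - constructor; auto.
  - constructor; auto. apply HM, Hv1; auto.
Qed.

Lemma valid_withR G D A B w :
  valid G D A w -> valid G D B w -> valid G D (With A B) w.
Proof. intros Hv1 Hv2 HG HD [HA HB] Hw rho HsG Ms HMs. split; auto. Qed.

Lemma valid_withL1 G D A B u C w :
  valid G ((A, u) :: D) C w -> valid G ((With A B, u) :: D) C w.
Proof. apply valid_left. intros [HA HB] Hu. split; [|split]; auto. now intros rho M []. Qed.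

Lemma valid_withL2 G D A B u C w :
  valid G ((B, u) :: D) C w -> valid G ((With A B, u) :: D) C w.
Proof. apply valid_left. intros [HA HB] Hu. split; [|split]; auto. now intros rho M []. Qed.

Lemma valid_topR G D w : valid G D Top w.
Proof. now intros until 1. Qed.

Lemma valid_plusR1 G D A B w : valid G D A w -> valid G D (Plus A B) w.
Proof. apply valid_right. intros [HA HB] Hw. split; [|split]; auto. now left. Qed.

Lemma valid_plusR2 G D A B w : valid G D B w -> valid G D (Plus A B) w.
Proof. apply valid_right. intros [HA HB] Hw. split; [|split]; auto. now right. Qed.

Lemma valid_plusL G D A B u C w :
  valid G ((A, u) :: D) C w -> valid G ((B, u) :: D) C w ->
  valid G ((Plus A B, u) :: D) C w.
Proof.
  intros Hv1 Hv2 HG HD HC Hw rho HsG Ms HMs.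
  apply Forall_cons_iff in HD as [[[HA HB] Hu] HD].
  destruct (sem_lin_cons_inv _ _ _ _ _ HMs) as (M & Ms' & -> & [HM | HM] & HMs');
    [apply Hv1 | apply Hv2]; auto; constructor; auto.
Qed.

Lemma valid_zeroL G D u C w : valid G ((Zero, u) :: D) C w.
Proof.
  intros _ _ _ _ rho _ Ms HMs.
  now destruct (sem_lin_cons_inv _ _ _ _ _ HMs) as (M & Ms' & _ & [] & _).
Qed.

Lemma valid_bangR G A w : valid G [] A w -> valid G [] (Bang A) w.
Proof.
  intros Hv HG HD HC Hw rho HsG Ms HMs. inversion HMs; subst.
  split; [apply red_refl|]. exact (Hv HG HD HC Hw rho HsG [] HMs).
Qed.

Lemma valid_bangL G D A u C w :
  valid ((A, u) :: G) D C w -> valid G ((Bang A, u) :: D) C w.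
Proof.
  intros Hv HG HD HC Hw rho HsG Ms HMs.
  apply Forall_cons_iff in HD as [[HA Hu] HD].
  destruct (sem_lin_cons_inv _ _ _ _ _ HMs) as (M & Ms' & -> & [HM HA0] & HMs').
  apply sem_red with ([] ++ concat Ms'); [now apply red_app_tail|].
  apply Hv; auto.
  - constructor; auto.
  - intros A' u' [[= <- <-] | Hin]; auto.
Qed.

Lemma valid_atR G D A u w : valid G D A u -> valid G D (At A u) w.
Proof.
  apply valid_right. intros [HA Hu] Hw. split; [|split]; auto.
  intros rho M H. simpl. now rewrite wval_nil.
Qed.

Lemma valid_atL G D A u v C w :
  valid G ((A, u) :: D) C w -> valid G ((At A u, v) :: D) C w.
Proof.
  apply valid_left. intros [HA Hu] Hv. split; [|split]; auto.
  intros rho M H. simpl in H. now rewrite wval_nil in H.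
Qed.

Lemma valid_downR G D A w : valid G D (popen 0 w A) w -> valid G D (Down A) w.
Proof.
  apply valid_right. intros HA Hw. split; [|split]; auto using pclosed_popen.
  intros rho M H. now apply sem_popen0.
Qed.

Lemma valid_downL G D A u C w :
  valid G ((popen 0 u A, u) :: D) C w -> valid G ((Down A, u) :: D) C w.
Proof.
  apply valid_left. intros HA Hu. split; [|split]; auto using pclosed_popen.
  intros rho M H. now apply sem_popen0.
Qed.

Lemma valid_allR G D A w x :
  ~ In x (ctxfv G ++ ctxfv D ++ pfv A ++ wfv w) ->
  valid G D (popen 0 (WFree x) A) w -> valid G D (WAll A) w.
Proof.
  rewrite !in_app_iff. intros Hx Hv HG HD HA Hw rho HsG Ms HMs v.
  rewrite <- (sem_open_fresh A rho x v), <- (weval_upd_fresh w rho x v) by tauto.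
  apply Hv; auto.
  - now apply pclosed_popen.
  - apply sem_unres_upd; tauto.
  - apply sem_lin_upd; tauto.
Qed.

Lemma valid_allL G D A e u C w :
  wlc e -> valid G ((popen 0 e A, u) :: D) C w -> valid G ((WAll A, u) :: D) C w.
Proof.
  intros He. apply valid_left. intros HA Hu.
  split; [|split]; auto using pclosed_popen, wlc_wclosed.
  intros rho M H. apply sem_popen0; [now apply wlc_wclosed | apply H].
Qed.

Lemma valid_exR G D A e w :
  wlc e -> valid G D (popen 0 e A) w -> valid G D (WEx A) w.
Proof.
  intros He. apply valid_right. intros HA Hw.
  split; [|split]; auto using pclosed_popen, wlc_wclosed.
  intros rho M H. exists (weval rho e). now apply sem_popen0; [apply wlc_wclosed|].
Qed.

Lemma valid_exL G D A u C w x :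
  ~ In x (ctxfv G ++ ctxfv D ++ pfv A ++ wfv u ++ pfv C ++ wfv w) ->
  valid G ((popen 0 (WFree x) A, u) :: D) C w -> valid G ((WEx A, u) :: D) C w.
Proof.
  rewrite !in_app_iff. intros Hx Hv HG HD HC Hw rho HsG Ms HMs.
  apply Forall_cons_iff in HD as [[HA Hu] HD].
  destruct (sem_lin_cons_inv _ _ _ _ _ HMs) as (M & Ms' & -> & [v HM] & HMs').
  apply (sem_upd_fresh C w rho x v); [rewrite in_app_iff; tauto|].
  apply Hv; auto.
  - constructor; auto. split; [now apply pclosed_popen | exact Hu].
  - apply sem_unres_upd; tauto.
  - constructor; [|apply sem_lin_upd; tauto].
    simpl. rewrite weval_upd_fresh, sem_open_fresh by tauto. exact HM.
Qed.

Theorem hyll_sound G D C w : hyll G D C w -> valid G D C w.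
Proof.
  induction 1; eauto using valid_exch, valid_init, valid_copy, valid_tensorR,
    valid_tensorL, valid_oneR, valid_oneL, valid_lolliR, valid_lolliL, valid_withR,
    valid_withL1, valid_withL2, valid_topR, valid_plusR1, valid_plusR2, valid_plusL,
    valid_zeroL, valid_bangR, valid_bangL, valid_atR, valid_atL, valid_downR,
    valid_downL, valid_allR, valid_allL, valid_exR, valid_exL.
Qed.

Lemma sem_enc_lits env rho k s t M :
  sem env rho (tensor_list (enc_lits k s)) t M <-> red M (state_res k s t).
Proof.
  revert k M. induction s as [|b [|b' s] IH]; intros k M.
  - reflexivity.
  - destruct b; reflexivity.
  - change (tensor_list (enc_lits k (b :: b' :: s)))
      with (Tensor (enc_lit b k) (tensor_list (enc_lits (S k) (b' :: s)))).
    change (state_res k (b :: b' :: s) t)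
      with ([(sym b, k, t)] ++ state_res (S k) (b' :: s) t).
    cbn [sem]. setoid_rewrite IH. split.
    + intros (M1 & M2 & H12 & H1 & H2). apply red_trans with (M1 ++ M2); auto.
      now apply red_app.
    + intros H. exists [(sym b, k, t)], (state_res (S k) (b' :: s) t).
      split; [exact H|]. split; [destruct b|]; apply red_refl.
Qed.

Lemma sem_enc_state env rho s t M :
  sem env rho (enc_state s) t M <-> red M (state_res 0 s t).
Proof. apply sem_enc_lits. Qed.

Lemma sem_enc_rule rho r u : In r R -> sem [] rho (enc_rule r) u [].
Proof.
  intros Hr v N HN. cbn [sem wval nth delta app] in *.
  rewrite pshift_enc_state, sem_enc_state in *.
  apply red_trans with (state_res 0 (pre r) v); auto.
  apply red_step with (state_res 0 (post r) (v + 1)); [|apply red_refl].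
  exists r, v, []. rewrite !app_nil_r. auto.
Qed.

Lemma sem_rules_ctx rho : sem_unres rho (rules_ctx R).
Proof.
  intros A u Hin. apply in_map_iff in Hin as (r & [= <- <-] & Hr).
  now apply sem_enc_rule.
Qed.

Lemma wf_rules_ctx : wf_ctx (rules_ctx R).
Proof.
  apply Forall_forall. intros [A u] Hin. apply in_map_iff in Hin as (r & [= <- <-] & _).
  simpl. rewrite pshift_enc_state. repeat split; auto using pclosed_enc_state.
Qed.

Lemma hyll_rules_red s s' w :
  hyll (rules_ctx R) [(enc_state s, WConst w)] (delta 1 (enc_state s')) (WConst w) ->
  red (state_res 0 s w) (state_res 0 s' (w + 1)).
Proof.
  intros H.
  assert (Hwf : wf_ctx [(enc_state s, WConst w)])
    by (repeat constructor; apply pclosed_enc_state).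
  assert (Hdelta : pclosed 0 (delta 1 (enc_state s'))).
  { simpl. rewrite pshift_enc_state. repeat split; auto using pclosed_enc_state. }
  assert (Hlin : sem_lin (fun _ => 0) [(enc_state s, WConst w)] [state_res 0 s w]).
  { repeat constructor. apply sem_enc_state, red_refl. }
  pose proof (hyll_sound _ _ _ _ H wf_rules_ctx Hwf Hdelta I _ (sem_rules_ctx _) _ Hlin)
    as Hsem.
  cbn [sem delta wval nth weval concat] in Hsem.
  now rewrite pshift_enc_state, sem_enc_state, app_nil_r in Hsem.
Qed.

End Resource_model.

Section Uniform_rules.

Variables (R : list rule) (n : nat).
Hypothesis uniform : forall r, In r R -> length (pre r) = n /\ length (post r) = n.

Definition total_time (M : list res) : nat := list_sum (map snd M).

Lemma total_time_app M N : total_time (M ++ N) = total_time M + total_time N.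
Proof. unfold total_time. now rewrite map_app, list_sum_app. Qed.

Lemma total_time_perm M N : Permutation M N -> total_time M = total_time N.
Proof. intros HP. apply Permutation_list_sum, Permutation_map, HP. Qed.

Lemma total_time_state_res k s t : total_time (state_res k s t) = length s * t.
Proof. revert k; induction s; intros k; simpl; auto. unfold total_time in *; simpl. now rewrite IHs. Qed.

Lemma step_total_time M N : step R M N -> total_time N = total_time M + n.
Proof.
  intros (r & t & K & Hr & Hpre & Hpost).
  rewrite (total_time_perm _ _ Hpre), (total_time_perm _ _ Hpost), !total_time_app,
    !total_time_state_res.
  destruct (uniform r Hr) as [-> ->]. lia.
Qed.

Lemma red_total_time M N : red R M N -> total_time M <= total_time N.
Proof.
  induction 1 as [M N HP | M N K Hs _ IH].
  - now rewrite (total_time_perm _ _ HP).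
  - rewrite (step_total_time _ _ Hs) in IH. lia.
Qed.

Lemma red_single_step M N : 0 < n -> red R M N -> total_time N = total_time M + n ->
  exists N', step R M N' /\ Permutation N' N.
Proof.
  intros Hn [M' N' HP | M' N' K Hs HK] Htime.
  - rewrite (total_time_perm _ _ HP) in Htime. lia.
  - exists N'. split; auto.
    destruct HK as [? ? HP | ? N'' ? Hs' HK]; auto.
    apply step_total_time in Hs, Hs'. apply red_total_time in HK. lia.
Qed.

Lemma red_transition s s' t : 0 < n -> length s = n -> length s' = n ->
  red R (state_res 0 s t) (state_res 0 s' (t + 1)) -> exists r, In r R /\ transition r s s'.
Proof.
  intros Hn Hs Hs' Hred.
  destruct (red_single_step _ _ Hn Hred) as (N & (r & v & K & Hr & Hpre & Hpost) & HN).
  { rewrite !total_time_state_res. lia. }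
  destruct (uniform r Hr) as [Hlpre Hlpost].
  assert (K = []) as ->.
  { apply Permutation_length in Hpre.
    rewrite length_app, !length_state_res in Hpre. destruct K; simpl in *; auto; lia. }
  rewrite app_nil_r in Hpre, Hpost.
  exists r. split; [exact Hr | split].
  - symmetry. eapply state_res_perm_inj, Hpre.
  - eapply state_res_perm_inj. transitivity N; [symmetry|]; eauto.
Qed.

End Uniform_rules.

Theorem proposition1 (n : nat) (R : list rule) (s s' : state) (w : nat) :
  0 < n ->
  length s = n -> length s' = n ->
  (forall r, In r R -> length (pre r) = n /\ length (post r) = n) ->
  ((exists r, In r R /\ transition r s s') <->
   hyll (rules_ctx R) [(enc_state s, WConst w)]
        (delta 1 (enc_state s')) (WConst w)).
Proof.
  intros Hn Hs Hs' Huniform. split.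
  - intros (r & Hr & [<- <-]). apply (hyll_fire_rule _ _ (WConst 0)); [|exact I].
    now apply (in_map (fun r => (enc_rule r, WConst 0))).
  - intros H. apply (red_transition R n Huniform s s' w); auto.
    now apply hyll_rules_red.
Qed.
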